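(* Let $U$ be a convex $2n$-gon with distinct vertices $U_1,\dots,U_{2n}$ in counterclockwise order, centered at the origin ($U_{i+n}=-U_i$, indices modulo $2n$), and let $P$ be a convex polygon with nonempty interior with vertex list $P_1,\dots,P_{2n}$ (consecutive entries may coincide) whose sides are parallel to the corresponding sides of $U$, i.e. $P_{i+1}-P_i=\lambda_{i+\frac12}(U_{i+1}-U_i)$ with $\lambda_{i+\frac12}\ge0$ for all $i$. The following statements are equivalent: (1) $P$ has constant $U$-width; (2) $P+(-P)$ is homothetic to $U$; (3) the corresponding diagonals of $U$ and $P$ are parallel, i.e. $P_i-P_{i+n}\parallel U_i-U_{i+n}$ for $1\le i\le n$; (4) there is a constant $a$ with $P_i-P_{i+n}=2a(U_i-U_{i+n})$ for $1\le i\le n$.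
   Context: The dual norm of the norm with unit ball $U$ is identified with $\|v\|=\sup\{[u,v]:u\in U\}$, where $[x,y]$ is the determinant of the matrix with columns $x,y$. For $\|v\|=1$, $h(P)(v)=\sup\{[p,v]:p\in P\}$ and $w(P)(v)=h(P)(v)+h(P)(-v)$; $P$ has constant $U$-width if $w(P)(v)$ is independent of $v$. *)

From HB Require Import structures.
From mathcomp Require Import all_boot all_order all_algebra.
From mathcomp Require Import all_classical all_reals.
Set Implicit Arguments. Unset Strict Implicit. Unset Printing Implicit Defensive.
Import Order.TTheory GRing.Theory Num.Theory.
Local Open Scope ring_scope.
Local Open Scope classical_set_scope.

Section Defs.
Variable R : realType.
Local Notation pt := 'rV[R]_2.

Definition xc (p : pt) : R := p ord0 ord0.
Definition yc (p : pt) : R := p ord0 ord_max.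

Definition det2 (x y : pt) : R := xc x * yc y - yc x * xc y.

Definition hull (V : nat -> pt) (m : nat) : set pt :=
  [set x | exists w : 'I_m -> R, (forall i, 0 <= w i) /\
      \sum_(i < m) w i = 1 /\ x = \sum_(i < m) w i *: V i].

Definition has_interior (S : set pt) : Prop :=
  exists x : pt, exists e : R, 0 < e /\
    forall y : pt, (xc (y - x)) ^+ 2 + (yc (y - x)) ^+ 2 < e ^+ 2 -> S y.

(* dual norm of the norm with unit ball U: ||v|| = sup {[u,v] : u in U} *)
Definition dnorm (U : set pt) (v : pt) : R := sup [set det2 u v | u in U].

Definition hfun (P : set pt) (v : pt) : R := sup [set det2 p v | p in P].

Definition wfun (P : set pt) (v : pt) : R := hfun P v + hfun P (- v).

Definition constant_width (U P : set pt) : Prop :=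
  exists c : R, forall v : pt, dnorm U v = 1 -> wfun P v = c.

Definition diff_body (A : set pt) : set pt :=
  [set p - q | p in A & q in A].

Definition homothetic (A B : set pt) : Prop :=
  exists (c : pt) (t : R), 0 < t /\ A = [set c + t *: u | u in B].

(* U_0, ..., U_{2n-1} (indices mod 2n) form a convex 2n-gon with distinct
   vertices in counterclockwise order: every other vertex lies strictly to
   the left of each directed edge U_i U_{i+1}. *)
Definition convex_ccw_polygon (U : nat -> pt) (m : nat) : Prop :=
  forall i j : nat, (i < m)%N -> (j < m)%N -> j != i -> j != (i.+1 %% m)%N ->
    0 < det2 (U i.+1 - U i) (U j - U i).

End Defs.

From HB Require Import structures.
From mathcomp Require Import all_boot all_order all_algebra.
From mathcomp Require Import all_classical all_reals.
From mathcomp Require Import ring lra zify.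
Import Order.TTheory GRing.Theory Num.Theory.
Local Open Scope ring_scope.
Local Open Scope classical_set_scope.
Set Implicit Arguments. Unset Strict Implicit.

(* Write e_i = U_{i+1} - U_i and D_i = P_i - P_{i+n}.  Convexity of U makes the
   edges turn counterclockwise, strictly within half a turn, so the functional
   [., e_i] is maximal on P at P_i and minimal at P_{i+n}, and maximal on U at
   U_i.  Hence the U-width of P in the direction e_i is [D_i, e_i] / [U_i, e_i],
   while D_{i+1} = D_i + (lam_i + lam_{i+n}) e_i.  As e_i and e_{i+1} are
   independent, constant width c forces D_i = c U_i for all i, and so does
   parallelism of the diagonals, by induction on i.  Conversely, if D_i = c U_i
   then P + (-P) = c U, both being cut out by the half-planes
   [x, e_i] <= c [U_i, e_i]; and c > 0 because P has interior.  Finally, if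
   P + (-P) = z + t U, the width is the support function of z + t U, and the
   central symmetry of U forces [z, v] = 0. *)

Section Plane.
Variable R : realType.
Local Notation pt := 'rV[R]_2.

Lemma xcyc_inj (p q : pt) : xc p = xc q -> yc p = yc q -> p = q.
Proof.
rewrite /xc /yc => ex ey; apply/matrixP => i [[|[|j]] Hj]; rewrite (ord1 i).
- by rewrite (_ : Ordinal Hj = ord0) //; apply: val_inj.
- by rewrite (_ : Ordinal Hj = ord_max) //; apply: val_inj.
- by [].
Qed.

Lemma xcD (p q : pt) : xc (p + q) = xc p + xc q. Proof. by rewrite /xc mxE. Qed.
Lemma ycD (p q : pt) : yc (p + q) = yc p + yc q. Proof. by rewrite /yc mxE. Qed.
Lemma xcN (p : pt) : xc (- p) = - xc p. Proof. by rewrite /xc mxE. Qed.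
Lemma ycN (p : pt) : yc (- p) = - yc p. Proof. by rewrite /yc mxE. Qed.
Lemma xcZ a (p : pt) : xc (a *: p) = a * xc p. Proof. by rewrite /xc mxE. Qed.
Lemma ycZ a (p : pt) : yc (a *: p) = a * yc p. Proof. by rewrite /yc mxE. Qed.
Lemma xc0 : xc (0 : pt) = 0. Proof. by rewrite /xc mxE. Qed.
Lemma yc0 : yc (0 : pt) = 0. Proof. by rewrite /yc mxE. Qed.

Definition coordE := (xcD, ycD, xcN, ycN, xcZ, ycZ, xc0, yc0).

Lemma det2C (x y : pt) : det2 x y = - det2 y x. Proof. rewrite /det2; ring. Qed.
Lemma det2xx (x : pt) : det2 x x = 0. Proof. rewrite /det2; ring. Qed.
Lemma det2Dl (x y v : pt) : det2 (x + y) v = det2 x v + det2 y v.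
Proof. rewrite /det2 !coordE; ring. Qed.
Lemma det2Bl (x y v : pt) : det2 (x - y) v = det2 x v - det2 y v.
Proof. rewrite /det2 !coordE; ring. Qed.
Lemma det2Nl (x v : pt) : det2 (- x) v = - det2 x v.
Proof. rewrite /det2 !coordE; ring. Qed.
Lemma det2Zl a (x v : pt) : det2 (a *: x) v = a * det2 x v.
Proof. rewrite /det2 !coordE; ring. Qed.
Lemma det2Dr (x y v : pt) : det2 v (x + y) = det2 v x + det2 v y.
Proof. rewrite /det2 !coordE; ring. Qed.
Lemma det2Br (x y v : pt) : det2 v (x - y) = det2 v x - det2 v y.
Proof. rewrite /det2 !coordE; ring. Qed.
Lemma det2Nr (x v : pt) : det2 v (- x) = - det2 v x.
Proof. rewrite /det2 !coordE; ring. Qed.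
Lemma det2Zr a (x v : pt) : det2 v (a *: x) = a * det2 v x.
Proof. rewrite /det2 !coordE; ring. Qed.
Lemma det20l (v : pt) : det2 0 v = 0. Proof. rewrite /det2 !coordE; ring. Qed.

Lemma det2_suml k (w : 'I_k -> R) (x : 'I_k -> pt) v :
  det2 (\sum_i w i *: x i) v = \sum_i w i * det2 (x i) v.
Proof.
rewrite /det2 /xc /yc !summxE !big_distrl /= -sumrB.
by apply: eq_bigr => i _; rewrite !mxE; ring.
Qed.

Lemma det2_cramer (a b c : pt) :
  det2 b c *: a + det2 c a *: b + det2 a b *: c = 0.
Proof. apply: xcyc_inj; rewrite !coordE /det2; ring. Qed.

Lemma det2_eq0_basis (x a b : pt) :
  det2 x a = 0 -> det2 x b = 0 -> det2 a b != 0 -> x = 0.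
Proof.
move=> xa xb ab; have := det2_cramer a b x.
rewrite det2C xb xa oppr0 !scale0r !add0r => /eqP.
by rewrite scaler_eq0 (negbTE ab) => /eqP.
Qed.

(* Directions [a], [b], [c], each turning counterclockwise from the previous
   one and all having [y] to their left, span less than half a turn. *)
Lemma det2_turn_gt0 (a b c y : pt) :
  0 < det2 b c -> 0 <= det2 a b ->
  0 < det2 a y -> 0 <= det2 b y -> 0 <= det2 c y -> 0 < det2 a c.
Proof.
move=> bc ab ay bY cy; rewrite ltNge; apply/negP => ac.
have plucker := congr1 (fun z : pt => det2 z y) (det2_cramer a b c).
rewrite /= !det2Dl !det2Zl det20l (det2C c a) in plucker.
have := mulr_gt0 bc ay; have := mulr_ge0 ab cy.
rewrite -oppr_ge0 in ac; have := mulr_ge0 ac bY.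
lra.
Qed.

Lemma has_interior_not_point (S : set pt) (p : pt) :
  has_interior S -> ~ (forall x, S x -> x = p).
Proof.
move=> [x [e [e_gt0 ball_x]]] Sp.
have Sx : S x.
  by apply: ball_x; rewrite subrr xc0 yc0 expr0n /= add0r; apply: exprn_gt0.
have Sx' : S (x + const_mx (e / 2)).
  apply: ball_x; rewrite addrAC subrr add0r /xc /yc !mxE.
  by move: (exprn_gt0 2 e_gt0); rewrite !expr2; lra.
have := congr1 (@xc R) (etrans (Sp _ Sx') (esym (Sp _ Sx))).
rewrite xcD /xc mxE; lra.
Qed.

Lemma wfunN (S : set pt) v : wfun S (- v) = wfun S v.
Proof. by rewrite /wfun opprK addrC. Qed.

End Plane.

Ltac pt_ring := apply: xcyc_inj; rewrite !coordE; ring.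

Section Periodic.
Variables (T : Type) (m : nat) (f : nat -> T).
Hypothesis f_per : forall x, f (x + m)%N = f x.

Lemma periodic_mod x : f x = f (x %% m)%N.
Proof.
rewrite {1}(divn_eq x m); elim: (x %/ m)%N => [|q IH]; first by rewrite mul0n.
by rewrite mulSn -addnA addnC f_per.
Qed.

Lemma periodic_addMn x k : f (x + k * m)%N = f x.
Proof.
elim: k => [|k IH]; first by rewrite addn0.
by rewrite mulSn addnCA addnC f_per.
Qed.

Lemma periodic_addl i x : f (i + (x + m))%N = f (i + x)%N.
Proof. by rewrite addnA f_per. Qed.

End Periodic.

Lemma periodic_shift (T : Type) (m : nat) (f : nat -> T) :
  (0 < m)%N -> (forall x, f (x + m)%N = f x) ->
  forall i j, exists2 s, (s < m)%N & f j = f (i + s)%N.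
Proof.
move=> m_gt0 f_per i j; exists ((j + i * m - i) %% m)%N; first exact: ltn_pmod.
rewrite -(periodic_mod (periodic_addl f_per i)) -(periodic_addMn f_per j i).
have i_le_im : (i <= i * m)%N by rewrite leq_pmulr.
by congr f; lia.
Qed.

Lemma sum_if_eq_ord (Z : nmodType) m x (F : 'I_m -> Z) (Hx : (x < m)%N) :
  \sum_(j < m) (if x == j :> nat then F j else 0) = F (Ordinal Hx).
Proof. by rewrite -big_mkcond (big_pred1 (Ordinal Hx)) // => j; rewrite eq_sym. Qed.

Section Hull.
Variables (R : realType) (m : nat) (V : nat -> 'rV[R]_2).
Hypotheses (m_gt0 : (0 < m)%N) (V_per : forall i, V (i + m)%N = V i).

Lemma hull_convex_comb k (w : 'I_k -> R) (f : 'I_k -> nat) :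
  (forall i, 0 <= w i) -> \sum_i w i = 1 -> hull V m (\sum_i w i *: V (f i)).
Proof.
move=> w_ge0 w_sum1.
exists (fun j : 'I_m => \sum_i (if (f i %% m)%N == j :> nat then w i else 0)).
split; first by move=> j; apply: sumr_ge0 => i _; case: ifP.
split.
  rewrite exchange_big /= -w_sum1; apply: eq_bigr => i _.
  exact: (sum_if_eq_ord (fun _ => w i) (ltn_pmod (f i) m_gt0)).
apply/esym; under eq_bigr do rewrite scaler_suml.
rewrite exchange_big /=; apply: eq_bigr => i _.
under eq_bigr do rewrite (fun_if (fun a => a *: V _)) scale0r.
rewrite (sum_if_eq_ord (fun j : 'I_m => w i *: V j) (ltn_pmod (f i) m_gt0)).
by rewrite -(periodic_mod V_per).
Qed.

Lemma hull_vertex j : hull V m (V j).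
Proof.
have := @hull_convex_comb 1 (fun _ => 1) (fun _ => j) (fun _ => ler01).
by rewrite !big_ord1 scale1r; apply.
Qed.

Lemma hull_det2_le v M p :
  (forall j, det2 (V j) v <= M) -> hull V m p -> det2 p v <= M.
Proof.
move=> V_le [w [w_ge0 [w_sum1 ->]]]; rewrite det2_suml.
rewrite -[M]mul1r -w_sum1 big_distrl /=.
by apply: ler_sum => i _; apply: ler_wpM2l.
Qed.

Lemma hull_det2_ge v M p :
  (forall j, M <= det2 (V j) v) -> hull V m p -> M <= det2 p v.
Proof.
move=> V_ge [w [w_ge0 [w_sum1 ->]]]; rewrite det2_suml.
rewrite -[M]mul1r -w_sum1 big_distrl /=.
by apply: ler_sum => i _; apply: ler_wpM2l.
Qed.

Lemma exists_det2_max v : exists j0, forall j, det2 (V j) v <= det2 (V j0) v.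
Proof.
have [j0 _ j0_max] :=
  @arg_maxP _ _ 'I_m (Ordinal m_gt0) xpredT (fun j => det2 (V j) v) isT.
exists j0 => j; rewrite (periodic_mod V_per j).
exact: (j0_max (Ordinal (ltn_pmod j m_gt0))).
Qed.

Lemma hfun_hull_vertex v j0 :
  (forall j, det2 (V j) v <= det2 (V j0) v) -> hfun (hull V m) v = det2 (V j0) v.
Proof.
move=> j0_max; rewrite /hfun; set S := (X in sup X).
have S_j0 : S (det2 (V j0) v) by exists (V j0); first exact: hull_vertex.
have ub : ubound S (det2 (V j0) v) by move=> _ [p Hp <-]; exact: hull_det2_le.
apply/le_anti/andP; split; first by apply: ge_sup => //; exists (det2 (V j0) v).
by apply: ub_le_sup => //; exists (det2 (V j0) v).
Qed.

Lemma hfun_hullZ a v : 0 <= a -> hfun (hull V m) (a *: v) = a * hfun (hull V m) v.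
Proof.
move=> a_ge0; have [j0 j0_max] := exists_det2_max v.
rewrite (hfun_hull_vertex j0_max) (@hfun_hull_vertex _ j0) ?det2Zr // => j.
by rewrite !det2Zr ler_wpM2l.
Qed.

Lemma wfun_hullZ a v : 0 <= a -> wfun (hull V m) (a *: v) = a * wfun (hull V m) v.
Proof. by move=> a_ge0; rewrite /wfun -scalerN !hfun_hullZ // mulrDr. Qed.

End Hull.

Section Homothety.
Variables (R : realType) (m : nat) (V W : nat -> 'rV[R]_2).
Hypotheses (m_gt0 : (0 < m)%N)
  (V_per : forall i, V (i + m)%N = V i) (W_per : forall i, W (i + m)%N = W i).

Lemma wfun_homothetic (c : 'rV[R]_2) (t : R) v : 0 <= t ->
  diff_body (hull V m) = [set c + t *: u | u in hull W m] ->
  wfun (hull V m) v = det2 c v + t * hfun (hull W m) v.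
Proof.
move=> t_ge0 hom.
have [j0 j0_max] := exists_det2_max m_gt0 V_per v.
have [j1 j1_max] := exists_det2_max m_gt0 V_per (- v).
have [k k_max] := exists_det2_max m_gt0 W_per v.
rewrite /wfun (hfun_hull_vertex m_gt0 V_per j0_max).
rewrite (hfun_hull_vertex m_gt0 V_per j1_max) (hfun_hull_vertex m_gt0 W_per k_max).
rewrite det2Nr -det2Bl; apply/le_anti/andP; split.
  have : diff_body (hull V m) (V j0 - V j1).
    by exists (V j0); [exact: hull_vertex | exists (V j1); [exact: hull_vertex |]].
  rewrite hom => -[u Wu <-].
  by rewrite det2Dl det2Zl lerD2l ler_wpM2l // (hull_det2_le k_max Wu).
have : diff_body (hull V m) (c + t *: W k).
  by rewrite hom; exists (W k) => //; exact: hull_vertex.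
rewrite -det2Zl -det2Dl => -[p Vp [q Vq <-]].
have := hull_det2_le j0_max Vp.
have := hull_det2_le j1_max Vq.
rewrite !det2Bl !det2Nr; lra.
Qed.

End Homothety.

Lemma exists_sign_change (R : realType) (f : nat -> R) s k :
  0 <= f s -> f (s + k.+1)%N <= 0 -> exists l, 0 <= f l /\ f l.+1 <= 0.
Proof.
elim: k s => [|k IH] s f_s f_sk; first by exists s; rewrite -addn1.
have [f_s1|f_s1] := lerP (f s.+1) 0; first by exists s.
by apply: (IH s.+1); [apply: ltW | rewrite addSnnS].
Qed.

Section Polygon.
Variables (R : realType) (n : nat) (U P : nat -> 'rV[R]_2) (lam : nat -> R).
Hypotheses (n_ge2 : (2 <= n)%N)
  (U_per : forall i, U (i + 2 * n)%N = U i)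
  (U_convex : convex_ccw_polygon U (2 * n))
  (U_sym : forall i, U (i + n)%N = - U i)
  (P_per : forall i, P (i + 2 * n)%N = P i)
  (lam_ge0 : forall i, 0 <= lam i)
  (P_side : forall i, P i.+1 - P i = lam i *: (U i.+1 - U i)).

Local Notation m := (2 * n)%N.
Local Notation hU := (hull U m).
Local Notation hP := (hull P m).
Let m_gt0 : (0 < m)%N. Proof. lia. Qed.

Definition edge i := U i.+1 - U i.
Definition diag i := P i - P (i + n)%N.

Lemma det2_edge_chord_gt0 i s :
  (2 <= s)%N -> (s < m)%N -> 0 < det2 (edge i) (U (i + s)%N - U i).
Proof.
move=> s_ge2 s_lt_m.
have U_succ : U (i %% m).+1 = U i.+1.
  rewrite (periodic_mod U_per (i %% m).+1) (periodic_mod U_per i.+1).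
  by rewrite -[(i %% m).+1]addn1 -[i.+1]addn1 modnDml.
have := U_convex (ltn_pmod i m_gt0) (ltn_pmod (i + s) m_gt0).
rewrite /edge -U_succ -!(periodic_mod U_per); apply.
  apply/negP => /eqP h.
  have : (i + s == i + 0 %[mod m])%N by rewrite addn0 h.
  by rewrite eqn_modDl modn_small // mod0n; lia.
apply/negP => /eqP h.
have : (i + s == i + 1 %[mod m])%N by rewrite h -[(i %% m).+1]addn1 modnDml.
by rewrite eqn_modDl modn_small // modn_small //; lia.
Qed.

Lemma det2_edge_chord_ge0 i s : 0 <= det2 (edge i) (U (i + s)%N - U i).
Proof.
rewrite (periodic_mod (periodic_addl U_per i)); have := ltn_pmod s m_gt0.
case E: (s %% m)%N => [|[|s']] s_lt_m.
- by rewrite addn0 subrr det2C det20l oppr0.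
- by rewrite addn1 det2xx.
- by apply/ltW/det2_edge_chord_gt0 => //; rewrite -E.
Qed.

Lemma edgeDn i : edge (i + n)%N = - edge i.
Proof. by rewrite /edge -addSn !U_sym; pt_ring. Qed.

Lemma det2_succ_gt0 i : 0 < det2 (U i) (U i.+1).
Proof.
have := det2_edge_chord_gt0 i n_ge2 (ltac:(lia)).
have -> : det2 (edge i) (U (i + n)%N - U i) = 2 * det2 (U i) (U i.+1).
  by rewrite U_sym /edge /det2 !coordE; ring.
by rewrite pmulr_rgt0.
Qed.

Lemma det2_edge_succ_gt0 i : 0 < det2 (edge i) (edge i.+1).
Proof.
have := det2_edge_chord_gt0 i (leqnn 2) (ltac:(lia)).
have -> : U (i + 2)%N - U i = edge i + edge i.+1 by rewrite /edge addn2; pt_ring.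
by rewrite det2Dr det2xx add0r.
Qed.

Lemma det2_edges_gt0 i r : (0 < r < n)%N -> 0 < det2 (edge i) (edge (i + r)%N).
Proof.
elim: r => [//|r IH] /andP[_ r_lt_n].
case: r IH r_lt_n => [_ _|r IH r_lt_n]; first by rewrite addn1 det2_edge_succ_gt0.
have IH' := IH (ltac:(lia)); set k := (i + r.+1)%N in IH' *.
rewrite addnS -/k.
apply: (det2_turn_gt0 (det2_edge_succ_gt0 k) (ltW IH') (y := U (i + n)%N - U k.+1)).
- have -> : U (i + n)%N - U k.+1 = U (i + (r.+2 + n))%N - U i.
    by rewrite addnA !U_sym /k -addnS addrC.
  by apply: det2_edge_chord_gt0; lia.
- have -> : U (i + n)%N - U k.+1 = (U (k + (n - r.+1))%N - U k) - edge k.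
    by rewrite (_ : (k + (n - r.+1) = i + n)%N) ?/edge ?opprB ?addrA ?subrK //; lia.
  by rewrite det2Br det2xx subr0 det2_edge_chord_ge0.
- by rewrite (_ : (i + n = k.+1 + (n - r.+2))%N); [exact: det2_edge_chord_ge0 | lia].
Qed.

Lemma det2_edges_le0 i s : (s < n)%N -> det2 (edge (i + s)%N) (edge i) <= 0.
Proof.
case: s => [_|s s_lt_n]; first by rewrite addn0 det2xx.
by rewrite det2C oppr_le0 ltW // det2_edges_gt0.
Qed.

Lemma P_succ j : P j.+1 = P j + lam j *: edge j.
Proof. by rewrite /edge -P_side addrC subrK. Qed.

Lemma det2_P_edge_nonincr i s d : (s + d <= n)%N ->
  det2 (P (i + (s + d))%N) (edge i) <= det2 (P (i + s)%N) (edge i).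
Proof.
elim: d => [|d IH] sd_le_n; first by rewrite addn0.
apply: le_trans (IH (ltac:(lia))).
rewrite addnS addnS P_succ det2Dl det2Zl gerDl.
by apply: mulr_ge0_le0 (lam_ge0 _) _; apply: det2_edges_le0; lia.
Qed.

Lemma det2_P_edge_max i j : det2 (P j) (edge i) <= det2 (P i) (edge i).
Proof.
have [s s_lt_m ->] := periodic_shift m_gt0 P_per i j.
have [s_le_n|n_lt_s] := leqP s n.
  by have := det2_P_edge_nonincr i (s := 0) s_le_n; rewrite add0n addn0.
have := det2_P_edge_nonincr (i + n) (s := s - n) (d := n - (s - n)) (ltac:(lia)).
rewrite (_ : (i + n + (s - n + (n - (s - n))) = i + m)%N); last lia.
rewrite (_ : (i + n + (s - n) = i + s)%N); last lia.
by rewrite P_per edgeDn !det2Nr lerN2.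
Qed.

Lemma det2_P_edge_min i j : det2 (P (i + n)%N) (edge i) <= det2 (P j) (edge i).
Proof. by have := det2_P_edge_max (i + n) j; rewrite edgeDn !det2Nr lerN2. Qed.

Lemma det2_U_edge_max i j : det2 (U j) (edge i) <= det2 (U i) (edge i).
Proof.
have [s _ ->] := periodic_shift m_gt0 U_per i j.
have := det2_edge_chord_ge0 i s.
rewrite det2Br (det2C _ (U (i + s)%N)) (det2C _ (U i)); lra.
Qed.

Lemma det2_U_edge_gt0 i : 0 < det2 (U i) (edge i).
Proof. by rewrite det2Br det2xx subr0 det2_succ_gt0. Qed.

Lemma diagS i : diag i.+1 = diag i + (lam i + lam (i + n)%N) *: edge i.
Proof. by rewrite /diag addSn !P_succ edgeDn; pt_ring. Qed.

Lemma diag_per i : diag (i + m)%N = diag i.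
Proof. by rewrite /diag P_per -addnA (addnC m) addnA P_per. Qed.

Lemma diagDn i : diag (i + n)%N = - diag i.
Proof. by rewrite /diag -addnA addnn -mul2n P_per opprB. Qed.

Lemma hfun_U_edge i : hfun hU (edge i) = det2 (U i) (edge i).
Proof. exact: (hfun_hull_vertex m_gt0 U_per (det2_U_edge_max i)). Qed.

Lemma wfun_P_edge i : wfun hP (edge i) = det2 (diag i) (edge i).
Proof.
rewrite /wfun (hfun_hull_vertex m_gt0 P_per (det2_P_edge_max i)).
rewrite (hfun_hull_vertex m_gt0 P_per (j0 := (i + n)%N)) => [|j].
  by rewrite /diag det2Bl !det2Nr.
by rewrite !det2Nr lerN2 det2_P_edge_min.
Qed.

Lemma det2_diag_edge_width c :
  (forall v, dnorm hU v = 1 -> wfun hP v = c) ->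
  forall i, det2 (diag i) (edge i) = c * det2 (U i) (edge i).
Proof.
move=> width_c i; set d := det2 (U i) (edge i).
have d_gt0 : 0 < d := det2_U_edge_gt0 i.
have dV_ge0 : 0 <= d^-1 by rewrite invr_ge0 ltW.
have := width_c (d^-1 *: edge i).
rewrite (wfun_hullZ m_gt0 P_per _ dV_ge0) wfun_P_edge.
change (dnorm hU _) with (hfun hU (d^-1 *: edge i)).
rewrite (hfun_hullZ m_gt0 U_per _ dV_ge0) hfun_U_edge mulVf ?gt_eqF //.
by move=> /(_ erefl) <-; rewrite mulrAC mulVf ?mul1r // gt_eqF.
Qed.

Lemma diag_eq_of_width c :
  (forall v, dnorm hU v = 1 -> wfun hP v = c) -> forall i, diag i = c *: U i.
Proof.
move=> width_c.
have width_i i : det2 (diag i - c *: U i) (edge i) = 0.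
  by rewrite det2Bl det2Zl (det2_diag_edge_width width_c) subrr.
suff diag_succ i : diag i.+1 = c *: U i.+1.
  move=> i; rewrite -diag_per -(U_per i).
  have -> : (i + m = (i + m).-1.+1)%N by lia.
  exact: diag_succ.
apply/subr0_eq; apply: (det2_eq0_basis (a := edge i) (b := edge i.+1)).
- have -> : diag i.+1 - c *: U i.+1 =
      (diag i - c *: U i) + (lam i + lam (i + n)%N - c) *: edge i.
    by rewrite diagS /edge; pt_ring.
  by rewrite det2Dl det2Zl det2xx mulr0 addr0 width_i.
- exact: width_i.
- exact/lt0r_neq0/det2_edge_succ_gt0.
Qed.

Lemma dnormN v : dnorm hU (- v) = dnorm hU v.
Proof.
have [k k_max] := exists_det2_max m_gt0 U_per v.
change (hfun hU (- v) = hfun hU v).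
rewrite (hfun_hull_vertex m_gt0 U_per k_max).
rewrite (hfun_hull_vertex m_gt0 U_per (j0 := (k + n)%N)) => [|j].
  by rewrite U_sym det2Nl det2Nr opprK.
rewrite U_sym det2Nl !det2Nr opprK -det2Nl -U_sym; exact: k_max.
Qed.

Lemma constant_width_of_homothetic :
  homothetic (diff_body hP) hU -> constant_width hU hP.
Proof.
move=> [c [t [t_gt0 hom]]].
have width v : wfun hP v = det2 c v + t * dnorm hU v.
  exact: (wfun_homothetic m_gt0 P_per U_per _ (ltW t_gt0) hom).
exists t => v v_unit.
have := width (- v); rewrite wfunN width dnormN v_unit det2Nr; lra.
Qed.

Lemma exists_sector y : exists l, 0 <= det2 (U l) y /\ det2 (U l.+1) y <= 0.
Proof.
have U_n : U n = - U 0 by rewrite -[n]add0n U_sym.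
have n_gt0 : (0 < n)%N by lia.
have [y0|y0] := lerP 0 (det2 (U 0) y).
  apply: (@exists_sign_change _ (fun l => det2 (U l) y) 0 n.-1) => //.
  by rewrite add0n prednK // U_n det2Nl oppr_le0.
apply: (@exists_sign_change _ (fun l => det2 (U l) y) n n.-1) => /=.
  by rewrite U_n det2Nl oppr_ge0 ltW.
rewrite prednK // (_ : (n + n = 0 + m)%N); last lia.
by rewrite U_per ltW.
Qed.

Lemma hull_U_of_edges y : (forall l, 0 <= det2 (edge l) (y - U l)) -> hU y.
Proof.
move=> y_left; have [l [l_y y_l1]] := exists_sector y.
set d := det2 (U l) (U l.+1); have d_gt0 : 0 < d := det2_succ_gt0 l.
have d_neq0 : d != 0 by rewrite gt_eqF.
set al := - det2 (U l.+1) y / d.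
set be := det2 (U l) y / d.
set ga := det2 (edge l) (y - U l) / d.
have al_ge0 : 0 <= al by rewrite divr_ge0 ?oppr_ge0 // ltW.
have be_ge0 : 0 <= be by rewrite divr_ge0 // ltW.
have ga_ge0 : 0 <= ga by rewrite divr_ge0 // ltW.
have sum1 : al + be + ga = 1.
  by rewrite /al /be /ga /edge /d /det2 !coordE; field.
have y_eq : y = al *: U l + be *: U l.+1 + (ga / 2) *: U 0 + (ga / 2) *: U n.
  by rewrite -[n]add0n U_sym /al /be /d; apply: xcyc_inj; rewrite !coordE /det2; field.
(* [y] lies in the sector spanned by [U l] and [U l.+1]; the remaining weight
   [ga] is split between the antipodal vertices [U 0] and [U n], which cancel. *)
pose w (i : 'I_4) := nth 0 [:: al; be; ga / 2; ga / 2] i.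
have := @hull_convex_comb _ _ _ m_gt0 U_per 4 w
  (fun i => nth 0%N [:: l; l.+1; 0%N; n] i).
rewrite !big_ord_recl !big_ord0 /= !addr0 !addrA -y_eq; apply.
  by rewrite /w => -[[|[|[|[|//]]]] ?] //=; apply: divr_ge0.
by rewrite /w /=; lra.
Qed.

Lemma diag_eq_of_lower c :
  (forall i, (i < n)%N -> diag i = c *: U i) -> forall i, diag i = c *: U i.
Proof.
move=> diag_lo i; rewrite (periodic_mod diag_per) (periodic_mod U_per i).
have := ltn_pmod i m_gt0; set k := (i %% m)%N => k_lt_m.
have [k_lt_n|n_le_k] := ltnP k n; first exact: diag_lo.
have -> : k = ((k - n) + n)%N by rewrite subnK.
by rewrite diagDn U_sym diag_lo ?scalerN //; lia.
Qed.

Lemma diag_eq_of_parallel :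
  (forall i, (i < n)%N -> det2 (diag i) (U i) = 0) ->
  exists c, forall i, (i < n)%N -> diag i = c *: U i.
Proof.
move=> diag_par.
have U01 : det2 (U 0) (U 1) != 0 := lt0r_neq0 (det2_succ_gt0 0).
exists (det2 (diag 0) (U 1) / det2 (U 0) (U 1)); set c := _ / _.
elim=> [_|i IH i_lt_n].
  apply/subr0_eq/(det2_eq0_basis _ _ U01).
    by rewrite det2Bl det2Zl det2xx mulr0 subr0 diag_par //; lia.
  by rewrite det2Bl det2Zl /c divfK // subrr.
have diag_i := IH (ltnW i_lt_n).
have := diag_par _ i_lt_n; rewrite diagS diag_i.
set mu := lam i + lam (i + n)%N.
have -> : det2 (c *: U i + mu *: edge i) (U i.+1) = (c - mu) * det2 (U i) (U i.+1).
  by rewrite /edge /det2 !coordE; ring.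
move/eqP; rewrite mulf_eq0 (negbTE (lt0r_neq0 (det2_succ_gt0 i))) orbF subr_eq0.
by move=> /eqP mu_c; rewrite -mu_c /edge; pt_ring.
Qed.

Lemma edge_neq0 i : edge i != 0.
Proof.
by apply/negP => /eqP e0; have := det2_edge_succ_gt0 i; rewrite e0 det20l ltxx.
Qed.

Lemma lam_pair_eq t :
  (forall i, diag i = t *: U i) -> forall i, lam i + lam (i + n)%N = t.
Proof.
move=> diag_t i; apply/eqP; rewrite -subr_eq0.
have step := diagS i; rewrite !diag_t in step.
have : (lam i + lam (i + n)%N - t) *: edge i =
    t *: U i + (lam i + lam (i + n)%N) *: edge i - t *: U i.+1.
  by rewrite /edge; pt_ring.
by rewrite -step subrr => /eqP; rewrite scaler_eq0 (negbTE (edge_neq0 i)) orbF.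
Qed.

Lemma diag_scale_gt0 t :
  has_interior hP -> (forall i, diag i = t *: U i) -> 0 < t.
Proof.
move=> P_int diag_t; have lam_t := lam_pair_eq diag_t.
have t_ge0 : 0 <= t by rewrite -(lam_t 0%N) addr_ge0.
rewrite lt_neqAle t_ge0 andbT; apply/eqP => t0.
have lam0 i : lam i = 0.
  by have := lam_t i; have := lam_ge0 i; have := lam_ge0 (i + n)%N; lra.
have P_const j : P j = P 0 by elim: j => [|j IH] //; rewrite P_succ lam0 scale0r addr0.
apply: (has_interior_not_point (p := P 0%N) P_int) => _ [w [_ [w_sum1 ->]]].
under eq_bigr do rewrite P_const.
by rewrite -scaler_suml w_sum1 scale1r.
Qed.

Lemma homothetic_of_diag_eq t :
  has_interior hP -> (forall i, diag i = t *: U i) -> homothetic (diff_body hP) hU.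
Proof.
move=> P_int diag_t; have t_gt0 := diag_scale_gt0 P_int diag_t.
exists 0, t; split => //; apply/seteqP; split.
  move=> _ [p Pp [q Pq <-]].
  exists (t^-1 *: (p - q)); last by rewrite add0r scalerA mulfV ?scale1r // gt_eqF.
  apply: hull_U_of_edges => l.
  have -> : U l = t^-1 *: diag l by rewrite diag_t scalerA mulVf ?scale1r // gt_eqF.
  rewrite -scalerBr det2Zr pmulr_rge0 ?invr_gt0 // /diag !det2Br !(det2C (edge l)).
  have := hull_det2_le (det2_P_edge_max l) Pp.
  have := hull_det2_ge (det2_P_edge_min l) Pq.
  lra.
move=> _ [u [w [w_ge0 [w_sum1 ->]]] <-].
exists (\sum_i w i *: P i).
  exact: (@hull_convex_comb _ _ _ m_gt0 P_per _ w (fun i => nat_of_ord i)).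
exists (\sum_i w i *: P (i + n)%N).
  exact: (@hull_convex_comb _ _ _ m_gt0 P_per _ w (fun i => (i + n)%N)).
rewrite -sumrB add0r scaler_sumr; apply: eq_bigr => j _.
by rewrite -scalerBr -/(diag j) diag_t !scalerA mulrC.
Qed.

Lemma parallel_diagonalsE :
  (forall i, (i < n)%N -> det2 (P i - P (i + n)%N) (U i - U (i + n)%N) = 0) <->
  (forall i, (i < n)%N -> det2 (diag i) (U i) = 0).
Proof.
have E i : det2 (P i - P (i + n)%N) (U i - U (i + n)%N) = 2 * det2 (diag i) (U i).
  by rewrite U_sym /diag /det2 !coordE; ring.
by split=> par i /par; rewrite E => h; lra.
Qed.

Lemma scaled_diagonalsE :
  (exists a : R, forall i, (i < n)%N ->
     P i - P (i + n)%N = (2 * a) *: (U i - U (i + n)%N)) <->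
  (exists c, forall i, (i < n)%N -> diag i = c *: U i).
Proof.
have E a i : (2 * a) *: (U i - U (i + n)%N) = (4 * a) *: U i by rewrite U_sym; pt_ring.
split=> [[a sc]|[c sc]].
  by exists (4 * a) => i /sc dE; rewrite -E -dE.
by exists (c / 4) => i /sc dE; rewrite E (mulrC 4) divfK ?pnatr_eq0.
Qed.

Lemma constant_width_tfae : has_interior hP ->
  [/\ (constant_width hU hP <-> homothetic (diff_body hP) hU),
      (homothetic (diff_body hP) hU <->
        (forall i, (i < n)%N -> det2 (P i - P (i + n)%N) (U i - U (i + n)%N) = 0)) &
      ((forall i, (i < n)%N -> det2 (P i - P (i + n)%N) (U i - U (i + n)%N) = 0) <->
        (exists a : R, forall i, (i < n)%N ->
            P i - P (i + n)%N = (2 * a) *: (U i - U (i + n)%N)))].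
Proof.
move=> P_int.
have width_lo : constant_width hU hP ->
    exists c, forall i, (i < n)%N -> diag i = c *: U i.
  by case=> c /diag_eq_of_width diag_c; exists c => i _.
have lo_hom : (exists c, forall i, (i < n)%N -> diag i = c *: U i) ->
    homothetic (diff_body hP) hU.
  by case=> c /diag_eq_of_lower; exact: homothetic_of_diag_eq.
have lo_par : (exists c, forall i, (i < n)%N -> diag i = c *: U i) ->
    forall i, (i < n)%N -> det2 (diag i) (U i) = 0.
  by case=> c diag_c i /diag_c ->; rewrite det2Zl det2xx mulr0.
split; split.
- by move/width_lo/lo_hom.
- exact: constant_width_of_homothetic.
- by move/constant_width_of_homothetic/width_lo/lo_par/parallel_diagonalsE.
- by move/parallel_diagonalsE/diag_eq_of_parallel/lo_hom.
- by move/parallel_diagonalsE/diag_eq_of_parallel/scaled_diagonalsE.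
- by move/scaled_diagonalsE/lo_par/parallel_diagonalsE.
Qed.

End Polygon.

Theorem corollary2p6 (R : realType) (n : nat) (U P : nat -> 'rV[R]_2)
  (lam : nat -> R)
  (hn : (2 <= n)%N)
  (Uper : forall i, U (i + 2 * n)%N = U i)
  (Uconv : convex_ccw_polygon U (2 * n))
  (Usym : forall i, U (i + n)%N = - U i)
  (Pper : forall i, P (i + 2 * n)%N = P i)
  (Pint : has_interior (hull P (2 * n)))
  (lam_ge0 : forall i, 0 <= lam i)
  (Pside : forall i, P i.+1 - P i = lam i *: (U i.+1 - U i)) :
  [/\ (constant_width (hull U (2 * n)) (hull P (2 * n)) <->
        homothetic (diff_body (hull P (2 * n))) (hull U (2 * n))),
      (homothetic (diff_body (hull P (2 * n))) (hull U (2 * n)) <->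
        (forall i, (i < n)%N -> det2 (P i - P (i + n)%N) (U i - U (i + n)%N) = 0)) &
      ((forall i, (i < n)%N -> det2 (P i - P (i + n)%N) (U i - U (i + n)%N) = 0) <->
        (exists a : R, forall i, (i < n)%N ->
            P i - P (i + n)%N = (2 * a) *: (U i - U (i + n)%N)))].
Proof. exact: (constant_width_tfae hn Uper Uconv Usym Pper lam_ge0 Pside Pint). Qed.
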